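(* For any weight matrix $V\in\mathbb{R}^{2p\times(d+1)}$, $\lVert\nabla_VL\rVert\le\sqrt{2p}\,\min\{L(V),1\}$.
   Context: $p\ge1$, $h=1/p$. Huberized ReLU: $\phi(z)=0$ for $z<0$, $z^2/(2h)$ for $z\in[0,h]$, $z-h/2$ for $z>h$. Data $(x_1,y_1),\ldots,(x_n,y_n)$ with $x_s\in\mathbb{R}^{d+1}$, $\lVert x_s\rVert=1$, $y_s\in\{-1,1\}$. For $V$ with rows $v_1,\ldots,v_{2p}$ and fixed $u_1=\cdots=u_p=1$, $u_{p+1}=\cdots=u_{2p}=-1$: $f_V(x)=\sum_{i=1}^{2p}u_i\phi(v_i\cdot x)$, $L(V)=\frac1n\sum_s\ln(1+\exp(-y_sf_V(x_s)))$. $\lVert\cdot\rVert$ is the Frobenius (Euclidean) norm. *)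

From HB Require Import structures.
From mathcomp Require Import all_boot all_order all_algebra.
From mathcomp Require Import all_classical all_reals all_analysis.
Set Implicit Arguments. Unset Strict Implicit. Unset Printing Implicit Defensive.
Import Order.TTheory GRing.Theory Num.Theory.
Import numFieldNormedType.Exports.
Local Open Scope ring_scope.

Section Defs.
Variable R : realType.

Definition hphi (p : nat) (z : R) : R :=
  let h := (p%:R)^-1 in
  if z < 0 then 0 else if z <= h then z ^+ 2 / (2 * h) else z - h / 2.

(* fixed output weights: u_i = 1 for i < p, -1 for p <= i < 2p *)
Definition uw (p : nat) (i : 'I_(2 * p)) : R := if (i < p)%N then 1 else -1.

Definition fV (p d : nat) (V : 'M[R]_(2 * p, d.+1)) (x : 'rV[R]_d.+1) : R :=
  \sum_(i < 2 * p) uw i * hphi p (\sum_(j < d.+1) V i j * x 0 j).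

Definition Loss (p d n : nat) (X : 'I_n -> 'rV[R]_d.+1) (Y : 'I_n -> R)
  (V : 'M[R]_(2 * p, d.+1)) : R :=
  (n%:R)^-1 * \sum_(s < n) ln (1 + expR (- (Y s * fV V (X s)))).

Definition frob (m k : nat) (A : 'M[R]_(m, k)) : R :=
  Num.sqrt (\sum_(i < m) \sum_(j < k) A i j ^+ 2).

Definition gradM (m k : nat) (F : 'M[R]_(m, k) -> R) (V : 'M[R]_(m, k))
  : 'M[R]_(m, k) :=
  \matrix_(i < m, j < k) ('D_(delta_mx i j) F V).

End Defs.

From HB Require Import structures.
From mathcomp Require Import all_boot all_order all_algebra.
From mathcomp Require Import all_classical all_reals all_analysis.
From mathcomp Require Import ring lra.
Import Order.TTheory GRing.Theory Num.Theory.
Import numFieldNormedType.Exports.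
Local Open Scope ring_scope.
Local Open Scope classical_set_scope.
Set Implicit Arguments. Unset Strict Implicit. Unset Printing Implicit Defensive.

(* Write l(m) = ln (1 + exp (- m)) for the logistic loss and m_s = y_s f_V(x_s).
   By the chain rule, row i of the gradient is
   -(1/n) sum_s sigma(m_s) y_s u_i phi'(v_i . x_s) x_s, where sigma = -l'.
   As |y_s| = |u_i| = 1, 0 <= phi' <= 1 and |x_s| = 1, the triangle inequality
   bounds the norm of each row by (1/n) sum_s sigma(m_s).  Finally
   sigma(m) = e^-m / (1 + e^-m) is at most 1, and at most l(m) because
   ln y >= 1 - 1/y; the 2p rows contribute the factor sqrt (2p). *)

Section DirectionalDerivative.
Variables (R : realType) (U : normedModType R).

Definition is_diff_along (F : U -> R) (x v : U) (df : R) :=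
  differentiable F x /\ 'D_v F x = df.

Lemma is_diff_along_sum n (F : 'I_n -> U -> R) x v (df : 'I_n -> R) :
  (forall i, is_diff_along (F i) x v (df i)) ->
  is_diff_along (fun y => \sum_(i < n) F i y) x v (\sum_(i < n) df i).
Proof.
move=> dF; rewrite -fct_sumE; split.
  by apply: differentiable_sum => i; case: (dF i).
rewrite derive_sum; last by move=> i; apply: diff_derivable; case: (dF i).
by apply: eq_bigr => i _; case: (dF i).
Qed.

Lemma is_diff_alongMl c F x v df :
  is_diff_along F x v df -> is_diff_along (fun y => c * F y) x v (c * df).
Proof.
case=> dF <-; split; last exact/deriveMl/diff_derivable.
exact: (differentiableM (differentiable_cst c x) dF).
Qed.

Lemma is_diff_along_comp (g : R -> R) F x v df dg :
  is_diff_along F x v df -> is_derive (F x) 1 g dg ->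
  is_diff_along (fun y => g (F y)) x v (dg * df).
Proof.
case=> dF <- [/derivable1_diffP g_diff <-].
have gF_diff : differentiable (g \o F) x by apply: differentiable_comp.
split=> //; rewrite -[fun y => g (F y)]/(g \o F).
rewrite !deriveE // diff_comp //= mulrC.
by rewrite -['d F x v in LHS]mulr1 -[_ * 1]/(_ *: 1) linearZ.
Qed.

End DirectionalDerivative.

Lemma is_diff_along_coord (R : realType) m k i j (x v : 'M[R]_(m, k)) :
  is_diff_along (fun N : 'M[R]_(m, k) => N i j) x v (v i j).
Proof.
split; first exact: differentiable_coord.
rewrite /derive; apply/lim_near_cst => //=; near=> t.
have t_neq0 : t != 0 by near: t; exact: nbhs_dnbhs_neq.
by rewrite !mxE addrK [_ *: _]mulKf.
Unshelve. all: by end_near.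
Qed.

Lemma is_diff_along_row_dot (R : realType) m k i (c : 'I_k -> R)
    (x v : 'M[R]_(m, k)) :
  is_diff_along (fun N : 'M[R]_(m, k) => \sum_j N i j * c j) x v
    (\sum_j v i j * c j).
Proof.
apply: is_diff_along_sum => j.
under [fun N => _]funext => N do rewrite mulrC.
rewrite mulrC; exact/is_diff_alongMl/is_diff_along_coord.
Qed.

Lemma is_derive_quadratic_error (R : realType) (f : R -> R) z a C : 0 < C ->
  (forall t, `|f (t + z) - f z - a * t| <= C * t ^+ 2) -> is_derive z 1 f a.
Proof.
move=> C_gt0 f_err.
suff : (fun t => t^-1 *: ((f \o shift z) (t *: 1) - f z)) @ 0^' --> a.
  by move=> f_cvg; apply: DeriveDef; [apply/cvg_ex; exists a | exact: cvg_lim].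
apply/cvgrPdist_le => e e_gt0; near=> t.
have t_neq0 : t != 0 by near: t; exact: nbhs_dnbhs_neq.
have t_small : `|t| < e / C.
  by near: t; apply: nbhs_dnbhs; apply: (@nbhs0_lt R R); exact: divr_gt0.
rewrite /= /shift [t *: 1]mulr1.
have -> : a - t^-1 * (f (t + z) - f z) = - (t^-1 * (f (t + z) - f z - a * t)).
  by field.
rewrite normrN normrM normfV.
have t_gt0 : 0 < `|t| by rewrite normr_gt0.
apply: le_trans (ler_wpM2l _ (f_err t)) _; first by rewrite invr_ge0 ltW.
rewrite -real_normK ?num_real //.
have -> : `|t|^-1 * (C * `|t| ^+ 2) = `|t| * C by field; rewrite gt_eqF.
by rewrite -ler_pdivlMr // ltW.
Unshelve. all: by end_near.
Qed.

Section HuberizedReLU.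
Variables (R : realType) (p : nat).
Hypothesis p_gt0 : (0 < p)%N.

Definition dhphi (z : R) : R :=
  let h := p%:R^-1 in if z < 0 then 0 else if z <= h then z / h else 1.

Lemma dhphi_itv z : 0 <= dhphi z <= 1.
Proof.
rewrite /dhphi /=; set h := p%:R^-1; have h_gt0 : 0 < h by rewrite invr_gt0 ltr0n.
case: (ltP z 0) => [_|z_ge0]; first by rewrite lexx ler01.
case: (leP z h) => [z_le_h|_]; last by rewrite lexx ler01.
by rewrite divr_ge0 ?(ltW h_gt0) //= ler_pdivrMr // mul1r.
Qed.

Lemma hphi_quadratic_error z t :
  `|hphi p (t + z) - hphi p z - dhphi z * t| <= p%:R * t ^+ 2.
Proof.
rewrite /hphi /dhphi /=; set h := p%:R^-1.
have h_gt0 : 0 < h by rewrite invr_gt0 ltr0n.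
have -> : p%:R = h^-1 by rewrite invrK.
set E := (X in `|X|).
(* Multiplied by [h], each case of the definitions is a polynomial inequality. *)
suff : `|h * E| <= t ^+ 2.
  by rewrite normrM gtr0_norm // [h^-1 * _]mulrC ler_pdivlMr // mulrC.
have scaled_hphi x : h * (if x < 0 then 0 else if x <= h then x ^+ 2 / (2 * h)
    else x - h / 2) = if x < 0 then 0 else if x <= h then x ^+ 2 / 2
    else h * x - h ^+ 2 / 2.
  case: ifP => _; first by rewrite mulr0.
  by case: ifP => _; field; rewrite ?gt_eqF ?pnatr_eq0.
have scaled_dhphi : h * (if z < 0 then 0 else if z <= h then z / h else 1) =
    if z < 0 then 0 else if z <= h then z else h.
  case: ifP => _; first by rewrite mulr0.
  by case: ifP => _; [field; rewrite gt_eqF | rewrite mulr1].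
rewrite /E mulrBr mulrBr mulrA !scaled_hphi scaled_dhphi.
move: (t + z) (addrK z t) => w <-.
case: (ltP w 0); case: (ltP z 0); case: (leP w h); case: (leP z h) => *;
  rewrite ler_norml; apply/andP; split;
  first [nra | have := sqr_ge0 (w - z); nra].
Qed.

Lemma is_derive_hphi (z : R) : is_derive z 1 (hphi p) (dhphi z).
Proof.
apply: (is_derive_quadratic_error (C := p%:R)); first by rewrite ltr0n.
exact: hphi_quadratic_error.
Qed.

End HuberizedReLU.

Section FiniteSums.
Variable R : realType.

Lemma sqr_wsum_le n (a b : 'I_n -> R) : (forall s, 0 <= a s) ->
  (\sum_s a s * b s) ^+ 2 <= (\sum_s a s) * \sum_s a s * b s ^+ 2.
Proof.
move=> a_ge0; set A := \sum_s a s; set B := \sum_s a s * b s.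
set C := \sum_s a s * b s ^+ 2.
have A_ge0 : 0 <= A by exact: sumr_ge0.
have var_ge0 : 0 <= A * (A * C - B ^+ 2).
  have -> : A * (A * C - B ^+ 2) = \sum_s a s * (A * b s - B) ^+ 2.
    have -> : \sum_s a s * (A * b s - B) ^+ 2 = \sum_s
        (A ^+ 2 * (a s * b s ^+ 2) - 2 * A * B * (a s * b s) + B ^+ 2 * a s).
      by apply: eq_bigr => s _; ring.
    by rewrite big_split sumrB /= -!mulr_sumr -/A -/B -/C; ring.
  by apply: sumr_ge0 => s _; rewrite mulr_ge0 ?sqr_ge0.
have [A_eq0|A_neq0] := eqVneq A 0.
  suff -> : B = 0 by rewrite A_eq0 expr0n mul0r.
  have a_eq0 s : a s = 0 by exact: (psumr_eq0P (fun s _ => a_ge0 s) A_eq0).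
  by rewrite /B big1 // => s _; rewrite a_eq0 mul0r.
have A_gt0 : 0 < A by rewrite lt_def A_neq0.
by rewrite -subr_ge0 -(pmulr_rge0 _ A_gt0).
Qed.

Lemma sum_sqr_lincomb_le n k (w : 'I_n -> R) (x : 'I_n -> 'I_k -> R) :
  (forall s, \sum_j x s j ^+ 2 = 1) ->
  \sum_j (\sum_s w s * x s j) ^+ 2 <= (\sum_s `|w s|) ^+ 2.
Proof.
move=> x_unit.
have col_le j : (\sum_s w s * x s j) ^+ 2 <=
    (\sum_s `|w s|) * \sum_s `|w s| * x s j ^+ 2.
  have norm_le : `|\sum_s w s * x s j| <= \sum_s `|w s| * `|x s j|.
    apply: le_trans (ler_norm_sum _ _ _) _.
    by apply: ler_sum => s _; rewrite normrM.
  have sqr_abs : \sum_s `|w s| * `|x s j| ^+ 2 = \sum_s `|w s| * x s j ^+ 2.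
    by apply: eq_bigr => s _; rewrite real_normK ?num_real.
  rewrite -sqr_abs; apply: le_trans (sqr_wsum_le _ (fun s => normr_ge0 (w s))).
  rewrite -real_normK ?num_real // lerXn2r ?nnegrE //.
  by apply: sumr_ge0 => s _; rewrite mulr_ge0.
apply: le_trans (ler_sum _ (fun j _ => col_le j)) _.
rewrite -mulr_sumr exchange_big /= expr2; apply: ler_wpM2l; first exact: sumr_ge0.
by apply: ler_sum => s _; rewrite -mulr_sumr x_unit mulr1.
Qed.

Lemma frob_le_rows m k (A : 'M[R]_(m, k)) M : 0 <= M ->
  (forall i, \sum_j A i j ^+ 2 <= M ^+ 2) -> frob A <= Num.sqrt m%:R * M.
Proof.
move=> M_ge0 rows_le; rewrite -(ger0_norm M_ge0) -sqrtr_sqr -sqrtrM //.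
rewrite ler_sqrt ?mulr_ge0 ?sqr_ge0 //.
apply: le_trans (ler_sum _ (fun i _ => rows_le i)) _.
by rewrite sumr_const card_ord mulr_natl.
Qed.

Lemma sqr_frob m k (A : 'M[R]_(m, k)) : frob A ^+ 2 = \sum_i \sum_j A i j ^+ 2.
Proof. by rewrite sqr_sqrtr // sumr_ge0 // => i _; rewrite sumr_ge0 // => j _; rewrite sqr_ge0. Qed.

Lemma sum_delta_mx_mul m k (i i' : 'I_m) (j : 'I_k) (c : 'I_k -> R) :
  \sum_j' (delta_mx i j : 'M[R]_(m, k)) i' j' * c j' = (i' == i)%:R * c j.
Proof.
rewrite (bigD1 j) //= mxE eqxx andbT big1 ?addr0 // => j' ne_j'j.
by rewrite mxE (negbTE ne_j'j) andbF mul0r.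
Qed.

End FiniteSums.

Section LogisticLoss.
Variable R : realType.

Definition logistic_slope (m : R) := expR (- m) / (1 + expR (- m)).

Lemma logistic_slope_ge0 m : 0 <= logistic_slope m.
Proof. by rewrite divr_ge0 ?addr_ge0 ?expR_ge0. Qed.

Lemma logistic_slope_le1 m : logistic_slope m <= 1.
Proof. by rewrite ler_pdivrMr ?addr_gt0 ?expR_gt0 // mul1r lerDr. Qed.

Lemma logistic_slope_le_loss m : logistic_slope m <= ln (1 + expR (- m)).
Proof.
set y := 1 + expR (- m); have y_gt0 : 0 < y by rewrite addr_gt0 ?expR_gt0.
have := expR_ge1Dx (- ln y); rewrite expRN lnK ?posrE //.
have -> : logistic_slope m = 1 - y^-1 by rewrite /logistic_slope /y; field; rewrite gt_eqF.
lra.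
Qed.

Lemma is_derive_logistic_loss (m : R) :
  is_derive m 1 (fun m => ln (1 + expR (- m))) (- logistic_slope m).
Proof.
have dexp : is_derive m 1 (fun m : R => expR (- m)) (expR (- m) * -1).
  exact: (is_derive1_comp (f := expR) (g := -%R)).
have dinner : is_derive m 1 (fun m : R => 1 + expR (- m)) (expR (- m) * -1).
  by rewrite -[X in is_derive _ _ _ X]add0r; apply: is_deriveD.
have -> : - logistic_slope m = (1 + expR (- m))^-1 * (expR (- m) * -1).
  by rewrite /logistic_slope mulrN1 mulrN mulrC.
have pos : 0 < 1 + expR (- m) by rewrite addr_gt0 ?expR_gt0.
exact: (is_derive1_comp (x := m) (is_derive1_ln pos) dinner).
Qed.

End LogisticLoss.

Section LossGradient.
Variables (R : realType) (p d n : nat) (X : 'I_n -> 'rV[R]_d.+1) (Y : 'I_n -> R).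
Variable V : 'M[R]_(2 * p, d.+1).
Hypothesis p_gt0 : (0 < p)%N.
Local Notation M := 'M[R]_(2 * p, d.+1).

Definition grad_weight (i : 'I_(2 * p)) (s : 'I_n) : R :=
  - (n%:R^-1 * logistic_slope (Y s * fV V (X s)))
  * (Y s * uw R i * dhphi p (\sum_j V i j * X s 0 j)).

Lemma is_diff_along_Loss (v : M) :
  is_diff_along (Loss X Y) V v
    (\sum_s \sum_i grad_weight i s * \sum_j v i j * X s 0 j).
Proof.
set df := (X in is_diff_along _ _ _ X).
have -> : df = n%:R^-1 * \sum_s (- logistic_slope (Y s * fV V (X s)) * (Y s *
    \sum_i uw R i * (dhphi p (\sum_j V i j * X s 0 j) * \sum_j v i j * X s 0 j))).
  rewrite mulr_sumr; apply: eq_bigr => s _; rewrite /grad_weight.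
  move: (logistic_slope _) => c; rewrite !mulr_sumr.
  by apply: eq_bigr => i _; ring.
apply: (is_diff_alongMl
  (F := fun N => \sum_s ln (1 + expR (- (Y s * fV N (X s))))) _).
apply: (is_diff_along_sum
  (F := fun s N => ln (1 + expR (- (Y s * fV N (X s))))) _) => s.
apply: (is_diff_along_comp (F := fun N => Y s * fV N (X s)) _
  (is_derive_logistic_loss _)).
apply: (is_diff_alongMl (F := fun N => fV N (X s)) _).
apply: (is_diff_along_sum
  (F := fun i (N : M) => uw R i * hphi p (\sum_j N i j * X s 0 j)) _) => i.
apply: (is_diff_alongMl (F := fun N : M => hphi p (\sum_j N i j * X s 0 j)) _).
apply: (is_diff_along_comp (F := fun N : M => \sum_j N i j * X s 0 j) _
  (is_derive_hphi p_gt0 _)).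
exact: is_diff_along_row_dot.
Qed.

Lemma differentiable_Loss : differentiable (Loss X Y) V.
Proof. by case: (is_diff_along_Loss 0). Qed.

Lemma gradM_Loss i j : gradM (Loss X Y) V i j = \sum_s grad_weight i s * X s 0 j.
Proof.
rewrite mxE; case: (is_diff_along_Loss (delta_mx i j)) => _ ->.
apply: eq_bigr => s _.
rewrite (bigD1 i) //= sum_delta_mx_mul eqxx mul1r big1 ?addr0 // => i' ne_i'i.
by rewrite sum_delta_mx_mul (negbTE ne_i'i) mul0r mulr0.
Qed.

Definition mean_logistic_slope : R :=
  n%:R^-1 * \sum_s logistic_slope (Y s * fV V (X s)).

Lemma mean_logistic_slope_ge0 : 0 <= mean_logistic_slope.
Proof. by rewrite mulr_ge0 ?invr_ge0 ?sumr_ge0 // => s _; exact: logistic_slope_ge0. Qed.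

Lemma sum_abs_grad_weight_le i : (forall s, `|Y s| <= 1) ->
  \sum_s `|grad_weight i s| <= mean_logistic_slope.
Proof.
move=> Y_le1; rewrite /mean_logistic_slope mulr_sumr; apply: ler_sum => s _.
have /andP[dhphi_ge0 dhphi_le1] := dhphi_itv p_gt0 (\sum_j V i j * X s 0 j).
have uw_norm : `|uw R i| = 1 by rewrite /uw; case: ifP; rewrite ?normrN normr1.
have mean_ge0 : 0 <= n%:R^-1 * logistic_slope (Y s * fV V (X s)).
  by rewrite mulr_ge0 ?invr_ge0 ?logistic_slope_ge0.
rewrite normrM normrN (ger0_norm mean_ge0) ler_piMr //.
by rewrite !normrM uw_norm mulr1 (ger0_norm dhphi_ge0) mulr_ile1.
Qed.

Lemma mean_logistic_slope_le_min : (0 < n)%N ->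
  mean_logistic_slope <= Num.min (Loss X Y V) 1.
Proof.
move=> n_gt0; rewrite /mean_logistic_slope le_min; apply/andP; split.
  rewrite ler_wpM2l ?invr_ge0 // ler_sum // => s _.
  exact: logistic_slope_le_loss.
rewrite mulrC ler_pdivrMr ?ltr0n // mul1r.
apply: le_trans (ler_sum _ (fun s _ => logistic_slope_le1 _)) _.
by rewrite sumr_const card_ord.
Qed.

End LossGradient.

Theorem lemma3 (R : realType) (p d n : nat) (hp : (1 <= p)%N) (hn : (0 < n)%N)
  (X : 'I_n -> 'rV[R]_d.+1) (Y : 'I_n -> R)
  (hX : forall s, frob (X s) = 1)
  (hY : forall s, Y s = 1 \/ Y s = -1)
  (V : 'M[R]_(2 * p, d.+1)) :
  differentiable (Loss X Y) V /\
  frob (gradM (Loss X Y) V) <= Num.sqrt ((2 * p)%:R) * Num.min (Loss X Y V) 1.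
Proof.
have Y_le1 s : `|Y s| <= 1 by case: (hY s) => ->; rewrite ?normrN normr1.
have X_unit s : \sum_j X s 0 j ^+ 2 = 1.
  by have := sqr_frob (X s); rewrite hX expr1n big_ord1.
split; first exact: differentiable_Loss.
apply: le_trans (ler_wpM2l (sqrtr_ge0 _) (mean_logistic_slope_le_min X Y V hn)).
apply: frob_le_rows => [|i]; first exact: mean_logistic_slope_ge0.
under eq_bigr => j _ do rewrite gradM_Loss //.
apply: le_trans (sum_sqr_lincomb_le _ (x := fun s j => X s 0 j) X_unit) _.
by rewrite lerXn2r ?nnegrE ?sumr_ge0 ?mean_logistic_slope_ge0 ?sum_abs_grad_weight_le.
Qed.
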